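(* For all odd integers $n\ge1$ and real numbers $a\ge1$, $x\in(0,\pi)$, we have $S^*_{n,a}(x)\ge\sin(x)$. Equality holds if and only if $n=1$.
   Context: For a real number $a$ and integers $0\le m$, $\binom{m+a}{m}=\frac{(a+1)(a+2)\cdots(a+m)}{m!}$ (equal to $1$ when $m=0$). For an integer $n\ge1$, $S^*_{n,a}(x)=\sum_{1\le j\le n,\ j\text{ odd}}\binom{n+a-j}{n-j}\sin(jx)$. *)

From Stdlib Require Import Reals Lra Lia Arith Factorial.
Open Scope R_scope.

Fixpoint rising (a : R) (m : nat) : R :=
  match m with
  | O => 1
  | S m' => rising a m' * (a + INR m)
  end.

(* binom(m + a, m) = (a+1)(a+2)...(a+m)/m! *)
Definition gbinom (m : nat) (a : R) : R := rising a m / INR (fact m).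

(* S*_{n,a}(x) = sum_{1<=j<=n, j odd} binom(n+a-j, n-j) sin(j x) *)
Fixpoint Sstar_aux (n k : nat) (a x : R) : R :=
  match k with
  | O => 0
  | S k' => Sstar_aux n k' a x +
            (if Nat.odd k then gbinom (n - k) a * sin (INR k * x) else 0)
  end.

Definition Sstar (n : nat) (a x : R) : R := Sstar_aux n n a x.

(* Write n = 2m + 1, c_k = binom(2k + a, 2k) and s_l = sin((2l + 1)x), so that
   S*_{n,a}(x) = sum_{l <= m} c_{m-l} s_l.  Summation by parts rewrites this as a
   combination of the partial sums Q_l = s_0 + ... + s_l with coefficients
   c_{m-l} - c_{m-l-1} and c_0 = 1.  Since Q_l sin x = sin^2((l + 1)x), every Q_l
   is nonnegative on (0, pi), and for a >= 1 each gap c_{k+1} - c_k is at least 2.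
   Hence for m >= 1 the sum is at least (c_m - c_{m-1}) Q_0 >= 2 sin x > sin x,
   while for m = 0 it is exactly sin x. *)

From Stdlib Require Import Reals Lra Lia Factorial.
Open Scope R_scope.

Lemma gbinom_0 (a : R) : gbinom 0 a = 1.
Proof. unfold gbinom; simpl; field. Qed.

Lemma gbinom_S (a : R) (i : nat) :
  gbinom (S i) a = gbinom i a * (a + INR (S i)) / INR (S i).
Proof.
  unfold gbinom; cbn [rising]; rewrite fact_simpl, mult_INR.
  assert (INR (fact i) <> 0) by (apply not_0_INR, fact_neq_0).
  assert (INR (S i) <> 0) by (apply not_0_INR; lia).
  field; auto.
Qed.

Lemma gbinom_ge (a : R) (i : nat) : 1 <= a -> INR i + 1 <= gbinom i a.
Proof.
  intros Ha; induction i as [|i IHi].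
  - rewrite gbinom_0; simpl; lra.
  - rewrite gbinom_S, S_INR.
    assert (Hi : 0 < INR i + 1) by (pose proof (pos_INR i); lra).
    apply (Rmult_le_reg_r (INR i + 1)); [exact Hi|].
    unfold Rdiv; rewrite Rmult_assoc, Rinv_l by lra; nra.
Qed.

(* From g_{i+1} - g_i = g_i a / (i + 1) and g_i >= i + 1. *)
Lemma gbinom_S_ge (a : R) (i : nat) : 1 <= a -> gbinom i a + 1 <= gbinom (S i) a.
Proof.
  intros Ha; pose proof (gbinom_ge a i Ha) as Hg.
  rewrite gbinom_S, S_INR.
  assert (Hi : 0 < INR i + 1) by (pose proof (pos_INR i); lra).
  replace (gbinom i a * (a + (INR i + 1)) / (INR i + 1))
    with (gbinom i a + gbinom i a * a / (INR i + 1)) by (field; lra).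
  enough (1 <= gbinom i a * a / (INR i + 1)) by lra.
  apply (Rmult_le_reg_r (INR i + 1)); [exact Hi|].
  unfold Rdiv; rewrite Rmult_assoc, Rinv_l by lra; nra.
Qed.

Lemma gbinom_SS_ge (a : R) (i : nat) :
  1 <= a -> gbinom i a + 2 <= gbinom (S (S i)) a.
Proof.
  intros Ha; pose proof (gbinom_S_ge a i Ha); pose proof (gbinom_S_ge a (S i) Ha); lra.
Qed.

Lemma sum_f_R0_by_parts (v s : nat -> R) (m : nat) :
  sum_f_R0 (fun l => v l * s l) (S m) =
  sum_f_R0 (fun l => (v l - v (S l)) * sum_f_R0 s l) m + v (S m) * sum_f_R0 s (S m).
Proof.
  induction m as [|m IHm]; [simpl; ring|].
  rewrite tech5, IHm; simpl; ring.
Qed.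

Lemma sum_f_R0_ge_first (f : nat -> R) (k : nat) :
  (forall l, 0 <= f l) -> f 0%nat <= sum_f_R0 f k.
Proof.
  intros Hf; induction k as [|k IHk]; simpl; [lra|].
  specialize (Hf (S k)); lra.
Qed.

Lemma Sstar_aux_odd (n : nat) (a x : R) (i : nat) :
  Sstar_aux n (2 * i + 1) a x =
  sum_f_R0 (fun l => gbinom (n - (2 * l + 1)) a * sin (INR (2 * l + 1) * x)) i.
Proof.
  induction i as [|i IHi]; [simpl; ring|].
  rewrite tech5, <- IHi.
  replace (2 * S i + 1)%nat with (S (S (2 * i + 1))) by lia.
  cbn [Sstar_aux].
  replace (S (S (2 * i + 1))) with (2 * S i + 1)%nat by lia.
  replace (S (2 * i + 1)) with (2 * S i)%nat by lia.
  rewrite Nat.odd_odd, Nat.odd_mul; simpl; ring.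
Qed.

Lemma sum_sin_odd_mul_sin (x : R) (l : nat) :
  sum_f_R0 (fun j => sin (INR (2 * j + 1) * x)) l * sin x = sin (INR (l + 1) * x) ^ 2.
Proof.
  induction l as [|l IHl]; [simpl; rewrite Rmult_1_l; ring|].
  rewrite tech5, Rmult_plus_distr_r, IHl.
  set (A := INR (S l + 1) * x); set (B := INR (l + 1) * x).
  assert (HAB : INR (2 * S l + 1) * x = A + B).
  { unfold A, B; rewrite !plus_INR, !mult_INR, !S_INR; simpl; ring. }
  assert (Hx : x = A - B).
  { unfold A, B; rewrite !plus_INR, !S_INR; simpl; ring. }
  rewrite HAB, Hx at 1; rewrite sin_plus, sin_minus.
  pose proof (sin2_cos2 A); pose proof (sin2_cos2 B); unfold Rsqr in *; nra.
Qed.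

Lemma sum_sin_odd_ge0 (x : R) (l : nat) :
  0 < sin x -> 0 <= sum_f_R0 (fun j => sin (INR (2 * j + 1) * x)) l.
Proof.
  intros Hs; pose proof (sum_sin_odd_mul_sin x l).
  pose proof (pow2_ge_0 (sin (INR (l + 1) * x))).
  destruct (Rle_or_lt 0 (sum_f_R0 (fun j => sin (INR (2 * j + 1) * x)) l)); nra.
Qed.

Lemma Sstar_1 (a x : R) : Sstar 1 a x = sin x.
Proof. unfold Sstar; simpl; rewrite gbinom_0, !Rmult_1_l; ring. Qed.

Lemma Sstar_odd_ge_twice_sin (m : nat) (a x : R) :
  1 <= a -> 0 < sin x -> 2 * sin x <= Sstar (2 * S m + 1) a x.
Proof.
  intros Ha Hs.
  set (s := fun j => sin (INR (2 * j + 1) * x)).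
  set (v := fun l => gbinom (2 * (S m - l)) a).
  unfold Sstar; rewrite Sstar_aux_odd.
  rewrite (sum_eq _ (fun l => v l * s l)).
  2: { intros l _; unfold v, s; do 2 f_equal; lia. }
  rewrite sum_f_R0_by_parts.
  assert (Hgap : forall l, 0 <= v l - v (S l)).
  { intros l; unfold v.
    destruct (Nat.le_gt_cases (S m) l).
    - replace (S m - l)%nat with 0%nat by lia; replace (S m - S l)%nat with 0%nat by lia; lra.
    - replace (2 * (S m - l))%nat with (S (S (2 * (S m - S l)))) by lia.
      pose proof (gbinom_SS_ge a (2 * (S m - S l)) Ha); lra. }
  assert (Hgap0 : 2 <= v 0%nat - v 1%nat).
  { unfold v; replace (2 * (S m - 0))%nat with (S (S (2 * (S m - 1)))) by lia.
    pose proof (gbinom_SS_ge a (2 * (S m - 1)) Ha); lra. }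
  assert (Hs0 : sum_f_R0 s 0 = sin x) by (unfold s; simpl; rewrite !Rmult_1_l; reflexivity).
  pose proof (sum_f_R0_ge_first (fun l => (v l - v (S l)) * sum_f_R0 s l) m
                (fun l => Rmult_le_pos _ _ (Hgap l) (sum_sin_odd_ge0 x l Hs))) as Hfirst.
  cbv beta in Hfirst; rewrite Hs0 in Hfirst.
  assert (Hlast : v (S m) = 1) by (unfold v; rewrite Nat.sub_diag; apply gbinom_0).
  pose proof (sum_sin_odd_ge0 x (S m) Hs) as Htail; fold s in Htail.
  rewrite Hlast; nra.
Qed.

Theorem theorem3p5 : forall (n : nat) (a x : R),
  (1 <= n)%nat -> Nat.odd n = true -> 1 <= a -> 0 < x < PI ->
  Sstar n a x >= sin x /\ (Sstar n a x = sin x <-> n = 1%nat).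
Proof.
  intros n a x _ Hodd Ha Hx.
  assert (Hs : 0 < sin x) by (apply sin_gt_0; lra).
  apply Nat.odd_spec in Hodd; destruct Hodd as [[|m] ->].
  - rewrite Sstar_1; split; [lra | tauto].
  - pose proof (Sstar_odd_ge_twice_sin m a x Ha Hs).
    split; [lra | split; [lra | lia]].
Qed.
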